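(* Let $\Gamma$ be a distance-regular graph with diameter $D\ge3$ and $a_1\ne0$, and let $\sigma_0,\dots,\sigma_D$ be a nontrivial pseudo cosine sequence. Then there exists at most one nontrivial pseudo cosine sequence $\rho_0,\dots,\rho_D$ such that $\sigma_0,\dots,\sigma_D$ and $\rho_0,\dots,\rho_D$ form a tight pair. If such $\rho_0,\dots,\rho_D$ exists, then the corresponding auxiliary parameter is unique.
   Context: $\Gamma$ is a finite connected undirected graph without loops or multiple edges, distance-regular with diameter $D$, intersection numbers $a_i,b_i,c_i$ ($c_0=0$, $b_D=0$), valency $k$, $c_i+a_i+b_i=k$. For $\theta\in\mathbb{R}$ the pseudo cosine sequence for $\theta$ is the sequence of reals $\sigma_0,\dots,\sigma_D$ with $\sigma_0=1$ and $c_i\sigma_{i-1}+a_i\sigma_i+b_i\sigma_{i+1}=\theta\sigma_i$ for $0\le i\le D-1$; nontrivial means $\sigma_1\ne1$. Pseudo cosine sequences $\sigma_i$, $\rho_i$ form a tight pair if $(\sigma_i\rho_i)_{i=0}^D$ is a pseudo cosine sequence. For a tight pair of nontrivial pseudo cosine sequences, an auxiliary parameter is a real $\varepsilon$ with $\sigma_i\rho_i-\sigma_{i-1}\rho_{i-1}=\varepsilon(\sigma_{i-1}\rho_i-\sigma_i\rho_{i-1})$ for $1\le i\le D$. *)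

From HB Require Import structures.
From mathcomp Require Import all_boot all_order all_algebra.
Set Implicit Arguments. Unset Strict Implicit. Unset Printing Implicit Defensive.
Import Order.TTheory GRing.Theory Num.Theory.

Definition simple_graph (T : finType) (adj : rel T) : Prop :=
  symmetric adj /\ irreflexive adj.

Fixpoint walkn (T : finType) (adj : rel T) (n : nat) (x y : T) : bool :=
  match n with
  | 0 => x == y
  | n'.+1 => [exists z, adj x z && walkn adj n' z y]
  end.

Definition connected_graph (T : finType) (adj : rel T) : Prop :=
  forall x y : T, exists n, walkn adj n x y.

(* Path-length distance: the least n with a walk of length n from x to y
   (on a connected graph this is < #|T|). *)
Definition gdist (T : finType) (adj : rel T) (x y : T) : nat :=
  find (fun n => walkn adj n x y) (iota 0 #|T|).

Definition has_diameter (T : finType) (adj : rel T) (D : nat) : Prop :=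
  (forall x y : T, gdist adj x y <= D) /\ exists x y : T, gdist adj x y = D.

Definition distance_regular (T : finType) (adj : rel T) (D : nat)
    (a b c : nat -> nat) : Prop :=
  [/\ simple_graph adj, connected_graph adj, has_diameter adj D &
    forall (i : nat) (x y : T), i <= D -> gdist adj x y = i ->
      [/\ #|[set z | adj y z & (gdist adj x z).+1 == i]| = c i,
          #|[set z | adj y z & gdist adj x z == i]| = a i &
          #|[set z | adj y z & gdist adj x z == i.+1]| = b i]].

Local Open Scope ring_scope.

Definition pseudo_cosine_for (R : realFieldType) (D : nat) (a b c : nat -> nat)
    (theta : R) (s : nat -> R) : Prop :=
  s 0%N = 1 /\
  forall i : nat, (i < D)%N ->
    (c i)%:R * s i.-1 + (a i)%:R * s i + (b i)%:R * s i.+1 = theta * s i.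

Definition pseudo_cosine (R : realFieldType) (D : nat) (a b c : nat -> nat)
    (s : nat -> R) : Prop :=
  exists theta : R, pseudo_cosine_for D a b c theta s.

Definition nontrivial_pcs (R : realFieldType) (D : nat) (a b c : nat -> nat)
    (s : nat -> R) : Prop :=
  pseudo_cosine D a b c s /\ s 1%N <> 1.

Definition tight_pair (R : realFieldType) (D : nat) (a b c : nat -> nat)
    (s r : nat -> R) : Prop :=
  pseudo_cosine D a b c s /\ pseudo_cosine D a b c r /\
  pseudo_cosine D a b c (fun i => s i * r i).

Definition auxiliary_parameter (R : realFieldType) (D : nat)
    (s r : nat -> R) (eps : R) : Prop :=
  forall i : nat, (1 <= i <= D)%N ->
    s i * r i - s i.-1 * r i.-1 = eps * (s i.-1 * r i - s i * r i.-1).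

From mathcomp Require Import all_boot all_order all_algebra.
From mathcomp Require Import zify ring.
Import Order.TTheory GRing.Theory Num.Theory.
Set Implicit Arguments. Unset Strict Implicit.

(* In a distance-regular graph c_0 = a_0 = 0, c_1 = 1 and b_0 = k = 1 + a_1 + b_1, so the
   first two steps of the recurrence of a pseudo cosine sequence give theta = k s_1 and
   b_1 s_2 = k s_1^2 - a_1 s_1 - 1.  Applied to sigma, rho and sigma rho this makes
   (sigma_1, rho_1) a zero of an explicit polynomial Q which, as a polynomial in rho_1, is
   (rho_1 - 1) times a nonzero polynomial of degree at most one when a_1, b_1 > 0 and
   sigma_1 <> 1.  So rho_1, hence theta_rho, is determined by sigma_1, and since b_i <> 0
   for i < D the recurrence determines rho.  At i = 1 the auxiliary parameter satisfies
   sigma_1 rho_1 - 1 = eps (rho_1 - sigma_1), which determines eps unless rho_1 = sigma_1;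
   that would force sigma_1 = -1, but Q(-1, -1) = 4 a_1 (a_1 + b_1) <> 0. *)

Section Walks.
Variables (T : finType) (adj : rel T).

Lemma gdist_le_walkn n x y : walkn adj n x y -> (gdist adj x y <= n)%N.
Proof.
move=> wn; rewrite /gdist; have [ltnT | leTn] := ltnP n #|T|; last first.
  by apply: leq_trans (find_size _ _) _; rewrite size_iota.
rewrite leqNgt; apply/negP => lt_n.
by have := before_find 0 lt_n; rewrite nth_iota // add0n wn.
Qed.

Lemma gdist_le_card x y : (gdist adj x y <= #|T|)%N.
Proof. by rewrite /gdist -{2}(size_iota 0 #|T|) find_size. Qed.

Lemma walkn_gdist x y : (gdist adj x y < #|T|)%N -> walkn adj (gdist adj x y) x y.
Proof.
move=> lt_dT; have has_walk : has (fun n => walkn adj n x y) (iota 0 #|T|).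
  by rewrite has_find size_iota.
by have := nth_find 0 has_walk; rewrite nth_iota.
Qed.

Lemma gdistxx x : gdist adj x x = 0%N.
Proof. by apply/eqP; rewrite -leqn0; apply: (@gdist_le_walkn 0) => /=. Qed.

Lemma gdist_eq0 x y : gdist adj x y = 0%N -> x = y.
Proof.
move=> d0; have : (gdist adj x y < #|T|)%N by rewrite d0; apply/card_gt0P; exists x.
by move/walkn_gdist; rewrite d0 => /eqP.
Qed.

Lemma walkn_rcons n x y z : walkn adj n x y -> adj y z -> walkn adj n.+1 x z.
Proof.
elim: n x => [|n IHn] x /=.
  by move=> /eqP -> ayz; apply/existsP; exists z; rewrite ayz /=.
by case/existsP=> u /andP[axu wu] ayz; apply/existsP; exists u; rewrite axu; exact: IHn.
Qed.

Lemma gdist_adj_le x y z : adj y z -> (gdist adj x z <= (gdist adj x y).+1)%N.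
Proof.
move=> ayz; have [lt_dT | le_Td] := ltnP (gdist adj x y) #|T|.
  exact/gdist_le_walkn/(walkn_rcons (walkn_gdist lt_dT)).
exact: leq_trans (gdist_le_card x z) (leqW le_Td).
Qed.

Lemma gdist_adj x y : irreflexive adj -> adj x y -> gdist adj x y = 1%N.
Proof.
move=> irr axy; have : (gdist adj x y <= 1)%N.
  by apply: (@gdist_le_walkn 1) => /=; apply/existsP; exists y; rewrite axy /=.
case: (gdist adj x y) (@gdist_eq0 x y) => [|[|//]] // /(_ erefl) xy.
by move: axy; rewrite xy irr.
Qed.

Lemma walkn_closed (P : pred T) n x y :
  (forall u v, P u -> adj u v -> P v) -> walkn adj n x y -> P x -> P y.
Proof.
move=> closedP; elim: n x => [|n IHn] x /=; first by move=> /eqP ->.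
by case/existsP=> u /andP[axu wu] Px; apply: (IHn u) => //; apply: closedP axu.
Qed.

Lemma card_neighbors_by_distance x y (i := gdist adj x y) :
  symmetric adj ->
  #|[set z | adj y z]| =
    (#|[set z | adj y z & (gdist adj x z).+1 == i]|
     + #|[set z | adj y z & gdist adj x z == i]|
     + #|[set z | adj y z & gdist adj x z == i.+1]|)%N.
Proof.
move=> sym.
set C := [set z | _ & _.+1 == i]; set A := [set z | _ & _ == i]; set B := [set z | _ & _ == i.+1].
have -> : [set z | adj y z] = C :|: A :|: B.
  apply/setP=> z; rewrite !inE; case ayz: (adj y z) => //=.
  have le_zy := gdist_adj_le x ayz; have := gdist_adj_le x (_ : adj z y).
  rewrite sym ayz -/i in le_zy * => /(_ isT) le_yz.
  apply/esym; rewrite -orbA; apply/or3P.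
  by case: (ltngtP (gdist adj x z) i) => ?; [constructor 1 | constructor 3 | constructor 2];
    apply/eqP; lia.
have disjoint_dist (P Q : pred nat) : (forall n, P n -> Q n -> False) ->
    [set z | adj y z & P (gdist adj x z)] :&: [set z | adj y z & Q (gdist adj x z)] = set0.
  move=> PQ; apply/setP=> z; rewrite !inE andbACA andbb.
  by apply/negbTE/negP => /andP[_ /andP[/PQ]]; apply.
rewrite !cardsU setIUl.
rewrite (disjoint_dist (fun n => n.+1 == i) (fun n => n == i)); last by move=> n /eqP <- /eqP; lia.
rewrite (disjoint_dist (fun n => n.+1 == i) (fun n => n == i.+1)); last by move=> n /eqP <- /eqP; lia.
rewrite (disjoint_dist (fun n => n == i) (fun n => n == i.+1)); last by move=> n /eqP -> /eqP; lia.
by rewrite setU0 !cards0 !subn0.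
Qed.

End Walks.

Section DistanceRegular.
Variables (T : finType) (adj : rel T) (D : nat) (a b c : nat -> nat).
Hypothesis drG : distance_regular adj D a b c.

Lemma dr_valency x y : (gdist adj x y <= D)%N ->
  #|[set z | adj y z]| = (c (gdist adj x y) + a (gdist adj x y) + b (gdist adj x y))%N.
Proof.
case: drG => [[sym _] _ _ dr] le_dD.
have [<- <- <-] := dr _ x y le_dD erefl.
exact: card_neighbors_by_distance.
Qed.

Lemma dr_c0 : c 0 = 0%N.
Proof.
case: drG => _ _ [_ [x _]] dr.
have [<- _ _] := dr 0%N x x (leq0n D) (gdistxx _ _).
by apply/eqP; rewrite cards_eq0; apply/eqP/setP=> z; rewrite !inE andbF.
Qed.

Lemma dr_a0 : a 0 = 0%N.
Proof.
case: drG => [[_ irr] _ [_ [x _]] dr].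
have [_ <- _] := dr 0%N x x (leq0n D) (gdistxx _ _).
apply/eqP; rewrite cards_eq0; apply/eqP/setP=> z; rewrite !inE.
by apply/negbTE/andP => -[axz /eqP/gdist_eq0 xz]; move: axz; rewrite xz irr.
Qed.

Lemma dr_edge : (0 < D)%N -> exists x y, adj x y.
Proof.
case: drG => _ conn [_ [x [y dxy]]] _ D_gt0; have [n] := conn x y.
case: n => [/= /eqP xy | n /= /existsP[z /andP[axz _]]]; last by exists x, z.
by move: D_gt0; rewrite -dxy xy gdistxx.
Qed.

Lemma dr_c1 : (0 < D)%N -> c 1 = 1%N.
Proof.
move=> D_gt0; case: drG => [[sym irr] _ _ dr]; have [x [y axy]] := dr_edge D_gt0.
have [<- _ _] := dr 1%N x y D_gt0 (gdist_adj irr axy).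
rewrite -[RHS](cards1 x); apply: eq_card => z; rewrite !inE eqSS.
apply/andP/eqP => [[_ /eqP/gdist_eq0 ->] // | ->].
by rewrite sym axy gdistxx.
Qed.

Lemma dr_b0 : (0 < D)%N -> b 0 = (1 + a 1 + b 1)%N.
Proof.
move=> D_gt0; case: drG => [[_ irr] _ _ _]; have [x [y axy]] := dr_edge D_gt0.
have := @dr_valency y y; rewrite gdistxx dr_c0 dr_a0 => /(_ (leq0n D)).
rewrite !add0n => <-.
by rewrite (@dr_valency x) gdist_adj // dr_c1.
Qed.

Lemma dr_ball_closed i x u v : (i <= D)%N -> b i = 0%N ->
  (gdist adj x u <= i)%N -> adj u v -> (gdist adj x v <= i)%N.
Proof.
case: drG => _ _ _ dr le_iD bi0 le_ui auv.
have := gdist_adj_le x auv; rewrite leq_eqVlt ltnS => /orP[/eqP dv | le_vu]; last first.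
  exact: leq_trans le_vu le_ui.
move: le_ui; rewrite leq_eqVlt => /orP[/eqP du | ]; last by rewrite dv.
have [_ _] := dr i x u le_iD du; rewrite bi0 => /eqP; rewrite cards_eq0 => /eqP/setP/(_ v).
by rewrite !inE auv dv du eqxx.
Qed.

Lemma dr_b_neq0 i : (i < D)%N -> b i <> 0%N.
Proof.
move=> lt_iD bi0; case: drG => _ conn [_ [x [y dxy]]] _; have [n wn] := conn x y.
have ball_closed u v : (gdist adj x u <= i)%N -> adj u v -> (gdist adj x v <= i)%N.
  exact: dr_ball_closed (ltnW lt_iD) bi0.
have := walkn_closed ball_closed wn; rewrite gdistxx dxy => /(_ isT).
by rewrite leqNgt lt_iD.
Qed.

End DistanceRegular.

Local Open Scope ring_scope.

Section TightForm.
Variables (R : realFieldType) (A B : R).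
Local Notation k := (1 + A + B).

Definition scaled_sigma2 (x : R) := k * x ^+ 2 - A * x - 1.

Definition tight_form (s r : R) :=
  scaled_sigma2 s * scaled_sigma2 r - B * scaled_sigma2 (s * r).

Lemma tight_form_eq0 s r s2 r2 :
  B * s2 = scaled_sigma2 s -> B * r2 = scaled_sigma2 r ->
  B * (s2 * r2) = scaled_sigma2 (s * r) -> tight_form s r = 0.
Proof.
move=> Es Er Esr; rewrite /tight_form -Es -Er -Esr; ring.
Qed.

Hypotheses (A_gt0 : 0 < A) (B_gt0 : 0 < B).

Lemma tight_form_root_uniq s r r' : s != 1 -> r != 1 -> r' != 1 ->
  tight_form s r = 0 -> tight_form s r' = 0 -> r = r'.
Proof.
move=> s_neq1 r_neq1 r'_neq1.
have k_neq0 : k != 0 by rewrite gt_eqF // !addr_gt0 ?ltr01.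
have A2_neq0 : A + 2 != 0 by rewrite gt_eqF // addr_gt0.
set al := k * (s - 1) * ((1 + A) * s + 1).
set ga := A * (B * s - scaled_sigma2 s).
have tight_formE x : tight_form s x = (x - 1) * (al * (x + 1) + ga).
  by rewrite /tight_form /al /ga /scaled_sigma2; ring.
have ga_neq0 : al = 0 -> ga != 0.
  move=> al0; have s_root : (1 + A) * s = -1.
    move/eqP: al0; rewrite !mulf_eq0 subr_eq0 (negbTE s_neq1) (negbTE k_neq0) /=.
    by rewrite addr_eq0 => /eqP.
  have : (1 + A) ^+ 2 * ga = - (A * B * (A + 2)).
    have -> : (1 + A) ^+ 2 * ga = A * (B * (1 + A) * ((1 + A) * s)
        - k * ((1 + A) * s) ^+ 2 + A * (1 + A) * ((1 + A) * s) + (1 + A) ^+ 2).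
      by rewrite /ga /scaled_sigma2; ring.
    by rewrite s_root; ring.
  move=> E; apply/eqP => ga0; move: E; rewrite ga0 mulr0 => /esym/eqP.
  by rewrite oppr_eq0 !mulf_eq0 (negbTE A2_neq0) !gt_eqF.
rewrite !tight_formE => /eqP; rewrite mulf_eq0 subr_eq0 (negbTE r_neq1) => /eqP Er.
move=> /eqP; rewrite mulf_eq0 subr_eq0 (negbTE r'_neq1) => /eqP Er'.
have : al * (r - r') = (al * (r + 1) + ga) - (al * (r' + 1) + ga) by ring.
rewrite Er Er' subrr => /eqP; rewrite mulf_eq0 subr_eq0 => /orP[/eqP al0 | /eqP //].
by move: Er; rewrite al0 mul0r add0r => /eqP; rewrite (negbTE (ga_neq0 al0)).
Qed.

Lemma tight_form_neg1_neq0 : tight_form (-1) (-1) != 0.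
Proof.
have -> : tight_form (-1) (-1) = 4 * A * (A + B) by rewrite /tight_form /scaled_sigma2; ring.
by rewrite !mulf_neq0 ?gt_eqF // addr_gt0.
Qed.

End TightForm.

Section PseudoCosine.
Variables (R : realFieldType) (D : nat) (a b c : nat -> nat).

Lemma pseudo_cosine_for_theta theta (s : nat -> R) : (0 < D)%N ->
  pseudo_cosine_for D a b c theta s ->
  theta = (c 0)%:R + (a 0)%:R + (b 0)%:R * s 1%N.
Proof. by move=> D_gt0 [s0 rec]; have := rec 0%N D_gt0; rewrite /= s0 !mulr1 => <-. Qed.

Hypothesis b_neq0 : forall i, (i < D)%N -> b i <> 0%N.

Lemma pseudo_cosine_for_eq theta (s r : nat -> R) :
  pseudo_cosine_for D a b c theta s -> pseudo_cosine_for D a b c theta r ->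
  forall i, (i <= D)%N -> s i = r i.
Proof.
move=> [s0 recs] [r0 recr].
suff eq2 i : (i <= D)%N -> s i.-1 = r i.-1 /\ s i = r i by move=> i /eq2[].
elim: i => [|i IHi] lt_iD; first by rewrite s0 r0.
have [eq_pred eq_i] := IHi (ltnW lt_iD); split => //.
have bi_neq0 : (b i)%:R != 0 :> R by rewrite pnatr_eq0; apply/eqP/b_neq0.
apply: (mulfI bi_neq0); apply: (@addrI _ ((c i)%:R * s i.-1 + (a i)%:R * s i)).
by rewrite recs // eq_pred eq_i recr.
Qed.

Lemma pseudo_cosine_eq (s r : nat -> R) : (0 < D)%N ->
  pseudo_cosine D a b c s -> pseudo_cosine D a b c r -> s 1%N = r 1%N ->
  forall i, (i <= D)%N -> s i = r i.
Proof.
move=> D_gt0 [ths pcs] [thr pcr] eq1.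
have eq_theta : ths = thr.
  by rewrite (pseudo_cosine_for_theta D_gt0 pcs) (pseudo_cosine_for_theta D_gt0 pcr) eq1.
by apply: pseudo_cosine_for_eq pcs _; rewrite eq_theta.
Qed.

End PseudoCosine.

Section AuxiliaryParameter.
Variables (R : realFieldType) (D : nat) (s r : nat -> R).
Hypotheses (D_gt0 : (0 < D)%N) (s0 : s 0 = 1) (r0 : r 0 = 1).

Lemma auxiliary_parameter_at1 e : auxiliary_parameter D s r e ->
  s 1%N * r 1%N - 1 = e * (r 1%N - s 1%N).
Proof. by move=> /(_ 1%N); rewrite D_gt0 /= s0 r0 !mulr1 !mul1r; apply. Qed.

Lemma auxiliary_parameter_uniq e1 e2 : r 1%N != s 1%N ->
  auxiliary_parameter D s r e1 -> auxiliary_parameter D s r e2 -> e1 = e2.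
Proof.
move=> r1_neq_s1 /auxiliary_parameter_at1 E1 /auxiliary_parameter_at1 E2.
by apply: (mulIf (_ : r 1%N - s 1%N != 0)); rewrite ?subr_eq0 // -E1 -E2.
Qed.

End AuxiliaryParameter.

Section FirstIntersectionNumbers.
Variables (R : realFieldType) (D : nat) (a b c : nat -> nat).
Hypotheses (D_gt1 : (1 < D)%N) (c0 : c 0 = 0%N) (a0 : a 0 = 0%N)
  (b0 : b 0 = (1 + a 1 + b 1)%N) (c1 : c 1 = 1%N).

Lemma pseudo_cosine_scaled_sigma2 (s : nat -> R) : pseudo_cosine D a b c s ->
  (b 1)%:R * s 2%N = scaled_sigma2 (a 1)%:R (b 1)%:R (s 1%N).
Proof.
move=> [theta pcs]; have theta_eq := pseudo_cosine_for_theta (ltnW D_gt1) pcs.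
case: pcs => s0 rec; have := rec 1%N D_gt1.
rewrite /= s0 theta_eq c0 a0 b0 c1 /scaled_sigma2 !natrD => E.
rewrite -[LHS](addKr (1 * 1 + (a 1)%:R * s 1%N)) E; ring.
Qed.

Lemma tight_pair_tight_form (s r : nat -> R) : tight_pair D a b c s r ->
  tight_form (a 1)%:R (b 1)%:R (s 1%N) (r 1%N) = 0.
Proof.
case=> pcs [pcr pcsr].
apply: (tight_form_eq0 (s2 := s 2%N) (r2 := r 2%N)); rewrite ?pseudo_cosine_scaled_sigma2 //.
exact: (pseudo_cosine_scaled_sigma2 pcsr).
Qed.

Lemma tight_pair_auxiliary_first_neq (s r : nat -> R) e :
  0 < (a 1)%:R :> R -> 0 < (b 1)%:R :> R -> s 1%N != 1 ->
  tight_pair D a b c s r -> auxiliary_parameter D s r e -> r 1%N != s 1%N.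
Proof.
move=> A_gt0 B_gt0 s1_neq1 tp aux; have [[_ [s0 _]] [[_ [r0 _]] _]] := tp.
apply/eqP => r1_eq_s1; have := auxiliary_parameter_at1 (ltnW D_gt1) s0 r0 aux.
rewrite r1_eq_s1 subrr mulr0 => /eqP; rewrite subr_eq0 -expr2 sqrf_eq1 (negbTE s1_neq1) /=.
move=> /eqP s1_eq_N1; have := tight_pair_tight_form tp; rewrite r1_eq_s1 s1_eq_N1.
exact/eqP/tight_form_neg1_neq0.
Qed.

End FirstIntersectionNumbers.

Theorem corollary12p2 (R : realFieldType) (T : finType) (adj : rel T)
    (D : nat) (a b c : nat -> nat) (sigma : nat -> R) :
  distance_regular adj D a b c -> (3 <= D)%N -> a 1%N <> 0%N ->
  nontrivial_pcs D a b c sigma ->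
  (forall rho rho' : nat -> R,
      nontrivial_pcs D a b c rho -> tight_pair D a b c sigma rho ->
      nontrivial_pcs D a b c rho' -> tight_pair D a b c sigma rho' ->
      forall i : nat, (i <= D)%N -> rho i = rho' i) /\
  (forall rho : nat -> R,
      nontrivial_pcs D a b c rho -> tight_pair D a b c sigma rho ->
      forall e1 e2 : R,
        auxiliary_parameter D sigma rho e1 ->
        auxiliary_parameter D sigma rho e2 -> e1 = e2).
Proof.
move=> drG D_ge3 a1_neq0 [_ /eqP s1_neq1].
have D_gt1 : (1 < D)%N by apply: leq_trans D_ge3.
have D_gt0 := ltnW D_gt1.
have b_neq0 := dr_b_neq0 drG.
have A_gt0 : 0 < (a 1)%:R :> R by rewrite ltr0n lt0n; apply/eqP.
have B_gt0 : 0 < (b 1)%:R :> R by rewrite ltr0n lt0n; apply/eqP/b_neq0.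
have [c0 a0] := (dr_c0 drG, dr_a0 drG).
have [b0 c1] := (dr_b0 drG D_gt0, dr_c1 drG D_gt0).
split=> [rho rho' [pc_rho /eqP r1_neq1] tp [pc_rho' /eqP r'1_neq1] tp' | rho _ tp e1 e2 aux1 aux2].
  apply: (pseudo_cosine_eq b_neq0 D_gt0 pc_rho pc_rho').
  apply: (tight_form_root_uniq A_gt0 B_gt0 s1_neq1 r1_neq1 r'1_neq1);
    exact: tight_pair_tight_form D_gt1 c0 a0 b0 c1 _ _ _.
have [[_ [s0 _]] [[_ [r0 _]] _]] := tp.
apply: (auxiliary_parameter_uniq D_gt0 s0 r0 _ aux1 aux2).
exact: (tight_pair_auxiliary_first_neq D_gt1 c0 a0 b0 c1 A_gt0 B_gt0 s1_neq1 tp aux1).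
Qed.
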